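(* Let $p$ be a prime and $n\ge 1$ an integer. Then $$\mathrm{ord}_p(\overline{F}_n)=\sum_{b=1}^{\lfloor\log_p n\rfloor}\ \sum_{a=1}^{\lfloor n/p^b\rfloor}\left(\varphi(ap^b)\Big(2-\Big\lfloor\frac{n}{ap^b}\Big\rfloor\Big)-\sum_{j\mid ap}\mu(j)\Big\lfloor\frac{d}{j}\Big\rfloor\right),$$ where, for each pair $(a,b)$, $d=d(a,b)$ denotes the unique integer with $0\le d<ap^b$ and $d\equiv n \pmod{ap^b}$.
   Context: $\overline{F}_n=\Big(\prod_{1\le h\le k\le n,\ \gcd(h,k)=1}\frac{h}{k}\Big)^{-1}$ is the reciprocal of the product of all nonzero Farey fractions of order $n$. For a nonzero rational $x$, $\mathrm{ord}_p(x)$ is the exponent of $p$ in $x$ (possibly negative). $\varphi$ is Euler's totient function, $\mu$ the M\''obius function, and the inner sum runs over the positive divisors $j$ of $ap$. *)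

From mathcomp Require Import all_boot all_order all_algebra.
Set Implicit Arguments. Unset Strict Implicit. Unset Printing Implicit Defensive.
Import Order.TTheory GRing.Theory Num.Theory.
Local Open Scope ring_scope.

(* Moebius function: mu(0) := 0 (irrelevant), mu(n) = (-1)^k if n is a
   product of k distinct primes, 0 if n has a square prime factor. *)
Definition moebius (n : nat) : int :=
  if n == 0%N then 0
  else if all (fun q => logn q n == 1%N) (primes n)
       then (-1) ^+ size (primes n) else 0.

Definition ordp (p : nat) (x : rat) : int :=
  (logn p `|numq x|%N)%:Z - (logn p `|denq x|%N)%:Z.

Definition Fbar (n : nat) : rat :=
  (\prod_(1 <= k < n.+1) \prod_(1 <= h < k.+1 | coprime h k)
     ((h%:R : rat) / (k%:R : rat)))^-1.

From mathcomp Require Import all_boot all_order all_algebra.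
From mathcomp Require Import zify ring.
Set Implicit Arguments. Unset Strict Implicit. Unset Printing Implicit Defensive.
Import Order.TTheory GRing.Theory Num.Theory.
Local Open Scope ring_scope.

(* Taking p-adic valuations turns the product into
   sum_(k <= n) sum_(h <= k, (h,k) = 1) (v_p(k) - v_p(h)),
   and v_p(x) = sum_(b >= 1) [p^b | x] splits it into layers b <= log_p n.
   In layer b, each denominator k = a p^b contributes phi(a p^b), while each
   numerator h = a p^b contributes the number of k in [a p^b, n] prime to
   a p^b: whole periods give (n / (a p^b) - 1) phi(a p^b), and the remaining
   k <= d are prime to a p^b iff they are prime to a p, which Moebius
   inversion counts as sum_(j | a p) mu(j) (d / j). *)

Lemma ordp_divz p (a b : int) : a != 0 -> b != 0 ->
  ordp p (a%:~R / b%:~R) = (logn p `|a|)%:Z - (logn p `|b|)%:Z.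
Proof.
move=> a0 b0; set x : rat := _ / _.
have x0 : x != 0 by rewrite mulf_neq0 ?invr_eq0 ?intr_eq0.
have cross : a * denq x = numq x * b.
  apply: (@intr_inj rat); rewrite !intrM numqE /x.
  by rewrite [RHS]mulrAC divfK ?intr_eq0.
have := congr1 (fun z : int => (logn p `|z|)%:Z) cross.
rewrite /= !abszM !lognM ?absz_gt0 ?denq_neq0 ?numq_eq0 // !PoszD /ordp.
lia.
Qed.

Lemma ordp_mul p (x y : rat) : x != 0 -> y != 0 ->
  ordp p (x * y) = ordp p x + ordp p y.
Proof.
move=> x0 y0.
have -> : x * y = (numq x * numq y)%:~R / (denq x * denq y)%:~R.
  by rewrite !intrM invfM mulrACA !divq_num_den.
rewrite ordp_divz ?mulf_neq0 ?numq_eq0 ?denq_neq0 //.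
rewrite !abszM !lognM ?absz_gt0 ?numq_eq0 ?denq_neq0 // !PoszD /ordp.
lia.
Qed.

Lemma ordp_inv p (x : rat) : x != 0 -> ordp p x^-1 = - ordp p x.
Proof.
move=> x0; rewrite -{1}[x]divq_num_den invf_div ordp_divz ?numq_eq0 ?denq_neq0 //.
rewrite /ordp; lia.
Qed.

Lemma ordp_divn p (h k : nat) : (0 < h)%N -> (0 < k)%N ->
  ordp p (h%:R / k%:R) = (logn p h)%:Z - (logn p k)%:Z.
Proof.
move=> h0 k0; have := @ordp_divz p h%:Z k%:Z.
by rewrite !absz_nat; apply; rewrite eqz_nat -lt0n.
Qed.

Lemma ordp_prod p (I : eqType) (r : seq I) (P : pred I) (F : I -> rat) :
  (forall i, i \in r -> P i -> F i != 0) ->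
  ordp p (\prod_(i <- r | P i) F i) = \sum_(i <- r | P i) ordp p (F i).
Proof.
move=> F_neq0; rewrite big_seq_cond [RHS]big_seq_cond.
pose Q x y := x != 0 /\ ordp p x = y.
suff [] : Q (\prod_(i <- r | (i \in r) && P i) F i)
            (\sum_(i <- r | (i \in r) && P i) ordp p (F i)) by [].
apply: big_ind2.
- by rewrite /Q oner_neq0 /ordp -[1]/(1%:Q) numq_int denq_int logn1.
- by move=> x y x' y' [x0 <-] [x'0 <-]; split; rewrite ?mulf_neq0 ?ordp_mul.
- by move=> i /andP[ri Pi]; split; first exact: F_neq0.
Qed.

Lemma ordp_Fbar p n : ordp p (Fbar n) =
  \sum_(1 <= k < n.+1) \sum_(1 <= h < k.+1 | coprime h k)
     ((logn p k)%:Z - (logn p h)%:Z).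
Proof.
have frac_neq0 (h k : nat) : h \in index_iota 1 k.+1 -> (0 < k)%N ->
    (h%:R / k%:R : rat) != 0.
  by rewrite mem_index_iota => /andP[h0 _] k0; rewrite mulf_neq0 ?invr_eq0 ?pnatr_eq0 -?lt0n.
have row_neq0 k : k \in index_iota 1 n.+1 ->
    \prod_(1 <= h < k.+1 | coprime h k) (h%:R / k%:R : rat) != 0.
  rewrite mem_index_iota => /andP[k0 _]; rewrite prodf_seq_neq0.
  by apply/allP => h hk; apply/implyP => _; exact: frac_neq0.
rewrite /Fbar ordp_inv; last by rewrite prodf_seq_neq0; apply/allP => k /row_neq0->.
rewrite ordp_prod => [|k /row_neq0 //]; rewrite -sumrN; apply: eq_big_seq => k.
rewrite mem_index_iota => /andP[k0 _].
rewrite ordp_prod => [|h hk _]; last exact: frac_neq0.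
rewrite -sumrN big_seq_cond [RHS]big_seq_cond; apply: eq_bigr => h /andP[].
by rewrite mem_index_iota => /andP[h0 _] _; rewrite ordp_divn // opprB.
Qed.

Lemma big_nat_dvdn (R : Type) (idx : R) (op : Monoid.law idx) (q N : nat)
    (F : nat -> R) : (0 < q)%N ->
  \big[op/idx]_(1 <= k < N.+1 | (q %| k)%N) F k =
  \big[op/idx]_(1 <= a < (N %/ q).+1) F (a * q)%N.
Proof.
move=> q0; elim: N => [|N IH]; first by rewrite div0n !big_geq.
rewrite big_mkcond big_nat_recr //= -big_mkcond IH divnS //.
case: ifP => qN; last by rewrite Monoid.mulm1.
by rewrite add1n [RHS]big_nat_recr //= -{1}(divnK qN) divnS // qN.
Qed.

Lemma big_divisors (R : Type) (idx : R) (op : Monoid.com_law idx) m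
    (F : nat -> R) : (0 < m)%N ->
  \big[op/idx]_(d <- divisors m) F d =
  \big[op/idx]_(1 <= d < m.+1 | (d %| m)%N) F d.
Proof.
move=> m0; rewrite -[RHS]big_filter; apply/perm_big/uniq_perm.
- exact: divisors_uniq.
- by rewrite filter_uniq ?iota_uniq.
move=> d; rewrite mem_filter mem_index_iota -dvdn_divisors //.
case dm: (d %| m)%N => //=; symmetry; apply/andP; split.
  by case: d dm => //; rewrite dvd0n => /eqP m00; rewrite m00 in m0.
by rewrite ltnS dvdn_leq.
Qed.

Lemma primes_prime_mul q j : prime q -> (0 < j)%N -> ~~ (q %| j)%N ->
  perm_eq (primes (q * j)) (q :: primes j).
Proof.
move=> pq j0 qNj; apply: uniq_perm; first exact: primes_uniq.
  by rewrite /= primes_uniq andbT mem_primes pq j0 (negbTE qNj).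
move=> x; rewrite in_cons !mem_primes muln_gt0 j0 prime_gt0 //=.
case px: (prime x) => /=; last by case: eqP px => // ->; rewrite pq.
by rewrite (Euclid_dvdM q j px) (dvdn_prime2 px pq).
Qed.

Lemma moebius_prime_mul q j : prime q -> (0 < j)%N -> ~~ (q %| j)%N ->
  moebius (q * j) = - moebius j.
Proof.
move=> pq j0 qNj; have qj_primes := primes_prime_mul pq j0 qNj.
rewrite /moebius muln_eq0 (gtn_eqF (prime_gt0 pq)) (gtn_eqF j0) /=.
rewrite (perm_all _ qj_primes) (perm_size qj_primes) /=.
rewrite (lognM _ (prime_gt0 pq) j0) logn_prime // eqxx logn_coprime ?prime_coprime //=.
rewrite (@eq_in_all _ _ (fun x => logn x j == 1%N)); last first.
  move=> x; rewrite mem_primes => /and3P[_ _ xj].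
  rewrite (lognM _ (prime_gt0 pq) j0) logn_prime //.
  have xNq : x != q by apply: contraNneq qNj => <-.
  by rewrite (negbTE xNq).
by case: ifP => _; rewrite ?oppr0 // exprS mulN1r.
Qed.

Lemma moebius_prime_mul_dvd q j : prime q -> (0 < j)%N -> (q %| j)%N ->
  moebius (q * j) = 0.
Proof.
move=> pq j0 qj; rewrite /moebius; case: ifP => // _.
suff /negbTE-> : ~~ all (fun x => logn x (q * j) == 1%N) (primes (q * j)) by [].
apply/allPn; exists q; first by rewrite mem_primes pq muln_gt0 prime_gt0 // j0 dvdn_mulr.
rewrite (lognM _ (prime_gt0 pq) j0) logn_prime // eqxx.
have : (0 < logn q j)%N by rewrite logn_gt0 mem_primes pq j0 qj.
by case: (logn q j).
Qed.

Lemma sum_moebius_divisors g : (0 < g)%N ->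
  \sum_(d <- divisors g) moebius d = (g == 1%N)%:R :> int.
Proof.
move=> g0; case: (ltngtP g 1) => [|g1|->];
  [by rewrite ltnNge g0 | | by rewrite (_ : divisors 1 = [:: 1%N]) // big_seq1].
(* For a prime q | g and g = g' q, the divisors a q of g contribute
   - moebius a for each a | g' prime to q, cancelling the divisors prime to q. *)
have pq := pdiv_prime g1; set q := pdiv g in pq *.
have q0 := prime_gt0 pq.
set g' := (g %/ q)%N; have def_g : g = (g' * q)%N by rewrite divnK ?pdiv_dvd.
have g'0 : (0 < g')%N by rewrite divn_gt0 // dvdn_leq ?pdiv_dvd.
pose S := \sum_(1 <= a < g'.+1 | (a %| g')%N && ~~ (q %| a)%N) moebius a.
have dvd_g_coprime d : ~~ (q %| d)%N -> (d %| g)%N = (d %| g')%N.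
  by move=> qNd; rewrite {1}def_g Gauss_dvdl // coprime_sym prime_coprime.
rewrite big_divisors // (bigID (dvdn q)) /=.
have -> : \sum_(1 <= d < g.+1 | (d %| g)%N && (q %| d)%N) moebius d = - S.
  rewrite (eq_bigl (fun d => (q %| d)%N && (d %| g)%N)) => [|d]; last exact: andbC.
  rewrite big_mkcondr big_nat_dvdn // -sumrN [RHS]big_mkcond; apply: eq_big_nat => a /andP[a0 _].
  rewrite {1}def_g dvdn_pmul2r // mulnC.
  case: (a %| g')%N => //=.
  by case: (boolP (q %| a)%N) => qa /=; [exact: moebius_prime_mul_dvd | exact: moebius_prime_mul].
rewrite (eq_bigl (fun d => (d %| g')%N && ~~ (q %| d)%N)) => [|d]; last first.
  by case: (boolP (q %| d)%N) => qd; rewrite ?andbF ?andbT ?dvd_g_coprime.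
have g'g : (g'.+1 <= g.+1)%N by rewrite ltnS leq_div.
rewrite (big_cat_nat _ (n := g'.+1)) //= [X in _ + (_ + X)]big1_seq ?addr0 ?addNr // => d.
rewrite mem_index_iota => /andP[/andP[dg' _] /andP[g'd _]].
by move: (dvdn_leq g'0 dg'); rewrite leqNgt g'd.
Qed.

Lemma coprime_sum_moebius k m : (0 < m)%N ->
  (coprime k m)%:R = \sum_(j <- divisors m) moebius j * (j %| k)%:R :> int.
Proof.
move=> m0; rewrite (eq_bigr (fun j => if (j %| k)%N then moebius j else 0)).
  rewrite -big_mkcond -big_filter (perm_big (divisors (gcdn m k))).
    by rewrite sum_moebius_divisors ?gcdn_gt0 ?m0 // coprime_sym.
  apply: uniq_perm; rewrite ?filter_uniq ?divisors_uniq // => d.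
  by rewrite mem_filter -!dvdn_divisors ?gcdn_gt0 ?m0 // dvdn_gcd andbC.
by move=> j _; case: (j %| k)%N; rewrite ?mulr1 ?mulr0.
Qed.

Lemma sum_dvdn_nat j d : (0 < j)%N ->
  \sum_(1 <= k < d.+1) (j %| k)%:R = (d %/ j)%:R :> int.
Proof.
move=> j0; rewrite (eq_bigr (fun k => if (j %| k)%N then 1 else 0)) => [|k _].
  by rewrite -big_mkcond big_nat_dvdn // sumr_const_nat subn1.
by case: (j %| k)%N.
Qed.

Lemma sum_coprime_moebius m d : (0 < m)%N ->
  \sum_(1 <= k < d.+1) (coprime k m)%:R =
  \sum_(j <- divisors m) moebius j * (d %/ j)%:R :> int.
Proof.
move=> m0; under eq_bigr do rewrite coprime_sum_moebius //.
rewrite exchange_big /= !big_seq; apply: eq_bigr => j jm.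
have j0 : (0 < j)%N by rewrite (dvdn_gt0 m0) // dvdn_divisors.
by rewrite -mulr_sumr sum_dvdn_nat.
Qed.

Lemma logn_sum_dvdn p x L : prime p -> (0 < x)%N -> (logn p x <= L)%N ->
  (logn p x)%:R = \sum_(1 <= b < L.+1) (p ^ b %| x)%:R :> int.
Proof.
move=> pp x0 xL; rewrite (big_cat_nat _ (n := (logn p x).+1)) //= ?ltnS //.
rewrite [X in _ + X]big1_seq ?addr0 => [|b /andP[_]]; last first.
  by rewrite mem_index_iota => /andP[xb _]; rewrite pfactor_dvdn // leqNgt xb.
rewrite (@eq_big_nat _ _ _ 1 _ _ (fun=> 1)) => [|b /andP[_]].
  by rewrite sumr_const_nat subn1.
by move=> bx; rewrite pfactor_dvdn // -ltnS bx.
Qed.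

Lemma logn_le_trunc_log p x n : prime p -> (0 < x)%N -> (x <= n)%N ->
  (logn p x <= trunc_log p n)%N.
Proof.
move=> pp x0 xn; apply: trunc_log_max; first exact: prime_gt1.
exact: leq_trans (dvdn_leq x0 (pfactor_dvdnn p x)) xn.
Qed.

Lemma big_triangle_swap (F : nat -> nat -> int) n :
  \sum_(1 <= k < n.+1) \sum_(1 <= h < k.+1) F h k =
  \sum_(1 <= h < n.+1) \sum_(h <= k < n.+1) F h k.
Proof.
elim: n => [|n IH]; first by rewrite !big_geq.
rewrite big_nat_recr //= IH [RHS]big_nat_recr //= big_nat1.
rewrite [X in _ + X]big_nat_recr //= addrA -big_split /=; congr (_ + _).
by apply: eq_big_nat => h /andP[_ hn]; rewrite [RHS]big_nat_recr // ltnW.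
Qed.

Lemma sum_coprime_const k (c : int) : (0 < k)%N ->
  \sum_(1 <= h < k.+1 | coprime h k) c = c * (totient k)%:R.
Proof.
move=> k0; have -> : totient k = (\sum_(1 <= h < k.+1) coprime h k)%N.
  rewrite totient_count_coprime big_nat_recr //= big_ltn //= addnC.
  rewrite /coprime gcdn0 gcdnn; congr (_ + _)%N.
  by apply: eq_bigr => h _; rewrite gcdnC.
rewrite natr_sum mulr_sumr big_mkcond /=; apply: eq_bigr => h _.
by case: (coprime h k); rewrite ?mulr1 ?mulr0.
Qed.

Definition coprime_count m x : int := \sum_(0 <= k < x) (coprime m k)%:R.

Lemma coprime_countDl m x : coprime_count m (m + x) = (totient m)%:R + coprime_count m x.
Proof.
rewrite /coprime_count (big_cat_nat _ (n := m)) ?leq_addr //= totient_count_coprime natr_sum.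
congr (_ + _); rewrite -{1}[m]add0n big_addn addnC addnK.
by apply: eq_bigr => k _; rewrite /coprime gcdnDr.
Qed.

Lemma coprime_countMDl m q r :
  coprime_count m (q * m + r) = (q * totient m)%:R + coprime_count m r.
Proof.
elim: q => [|q IH]; first by rewrite !mul0n add0r.
by rewrite mulSn -addnA coprime_countDl IH addrA -natrD -mulSn.
Qed.

Lemma sum_coprime_tail m n : (1 < m)%N -> (m <= n)%N ->
  \sum_(m <= k < n.+1) (coprime m k)%:R =
  (totient m)%:R * ((n %/ m)%:R - 1)
    + \sum_(1 <= k < (n %% m).+1) (coprime k m)%:R :> int.
Proof.
move=> m1 mn.
have split_m : coprime_count m n.+1 =
    coprime_count m m + \sum_(m <= k < n.+1) (coprime m k)%:R.
  by rewrite /coprime_count (big_cat_nat _ (n := m)) //= ltnW.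
have count_m : coprime_count m m = (totient m)%:R.
  by rewrite -{2}[m]addn0 coprime_countDl /coprime_count big_geq ?addr0.
have count_rem : coprime_count m (n %% m).+1 = \sum_(1 <= k < (n %% m).+1) (coprime k m)%:R.
  rewrite /coprime_count big_ltn //= /coprime gcdn0 (gtn_eqF m1) add0r.
  by apply: eq_bigr => k _; rewrite gcdnC.
have := coprime_countMDl m (n %/ m) (n %% m).+1.
rewrite addnS -divn_eq split_m count_m count_rem natrM => counts.
by apply: (addrI (totient m)%:R); rewrite counts; ring.
Qed.

Lemma ordp_Fbar_layers p n : prime p ->
  ordp p (Fbar n) =
  \sum_(1 <= b < (trunc_log p n).+1) \sum_(1 <= k < n.+1)
     \sum_(1 <= h < k.+1 | coprime h k) ((p ^ b %| k)%:R - (p ^ b %| h)%:R).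
Proof.
move=> pp; rewrite ordp_Fbar.
under eq_big_nat => k /andP[k0 kn].
  rewrite big_seq_cond; under eq_bigr => h /andP[].
    rewrite mem_index_iota => /andP[h0 hk] _.
    have kL : (logn p k <= trunc_log p n)%N by rewrite logn_le_trunc_log // -ltnS.
    have hL : (logn p h <= trunc_log p n)%N.
      by rewrite logn_le_trunc_log // -ltnS (leq_trans hk kn).
    rewrite -[(logn p k)%:Z]natz -[(logn p h)%:Z]natz.
    rewrite (logn_sum_dvdn pp k0 kL) (logn_sum_dvdn pp h0 hL) -sumrB; over.
  rewrite -big_seq_cond exchange_big; over.
by rewrite exchange_big.
Qed.

Lemma sum_Farey_dvdn_den q n : (0 < q)%N ->
  \sum_(1 <= k < n.+1) \sum_(1 <= h < k.+1 | coprime h k) (q %| k)%:R =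
  \sum_(1 <= a < (n %/ q).+1) (totient (a * q))%:R :> int.
Proof.
move=> q0; rewrite -(@big_nat_dvdn _ _ _ q n (fun k => (totient k)%:R)) //.
rewrite big_mkcond; apply: eq_big_nat => k /andP[k0 _].
by rewrite sum_coprime_const //; case: (q %| k)%N; rewrite ?mul1r ?mul0r.
Qed.

Lemma sum_Farey_dvdn_num q n : (0 < q)%N ->
  \sum_(1 <= k < n.+1) \sum_(1 <= h < k.+1 | coprime h k) (q %| h)%:R =
  \sum_(1 <= a < (n %/ q).+1) \sum_(a * q <= k < n.+1) (coprime (a * q) k)%:R
    :> int.
Proof.
move=> q0.
rewrite -(@big_nat_dvdn _ _ _ q n (fun h => \sum_(h <= k < n.+1) (coprime h k)%:R)) //.
pose G h k : int := if coprime h k then (q %| h)%:R else 0.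
rewrite (eq_bigr (fun k => \sum_(1 <= h < k.+1) G h k)) => [|k _]; last first.
  by rewrite big_mkcond.
rewrite big_triangle_swap big_mkcond; apply: eq_bigr => h _; rewrite /G.
case: (q %| h)%N; last by rewrite big1 // => k _; case: coprime.
by apply: eq_bigr => k _; case: coprime.
Qed.

Lemma sum_coprime_tail_pfactor p a b n : prime p -> (0 < a)%N -> (0 < b)%N ->
  (a * p ^ b <= n)%N ->
  \sum_(a * p ^ b <= k < n.+1) (coprime (a * p ^ b) k)%:R =
  (totient (a * p ^ b))%:R * ((n %/ (a * p ^ b))%:R - 1)
    + \sum_(j <- divisors (a * p)) moebius j * ((n %% (a * p ^ b)) %/ j)%:R
    :> int.
Proof.
move=> pp a0 b0 mn; have p1 := prime_gt1 pp.
have m1 : (1 < a * p ^ b)%N.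
  by rewrite (leq_trans p1) // (leq_trans (leq_pexp2l (ltnW p1) b0)) ?leq_pmull.
rewrite sum_coprime_tail // -sum_coprime_moebius ?muln_gt0 ?a0 ?prime_gt0 //.
by congr (_ + _); apply: eq_bigr => k _; rewrite !coprimeMr coprime_pexpr.
Qed.

Theorem theorem4p1 (p n : nat) (hp : prime p) (hn : (1 <= n)%N) :
  ordp p (Fbar n) =
  \sum_(1 <= b < (trunc_log p n).+1)
    \sum_(1 <= a < (n %/ p ^ b).+1)
      ((totient (a * p ^ b))%:Z * (2 - (n %/ (a * p ^ b))%:Z)
       - \sum_(j <- divisors (a * p)%N)
            moebius j * ((n %% (a * p ^ b)) %/ j)%:Z).
Proof.
rewrite ordp_Fbar_layers //; apply: eq_big_nat => b /andP[b0 _].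
have pb0 : (0 < p ^ b)%N by rewrite expn_gt0 prime_gt0.
under eq_bigr do rewrite sumrB.
rewrite sumrB sum_Farey_dvdn_den // sum_Farey_dvdn_num // -sumrB.
apply: eq_big_nat => a /andP[a0 a_le].
have apb_le : (a * p ^ b <= n)%N by rewrite -leq_divRL // -ltnS.
rewrite sum_coprime_tail_pfactor //.
under eq_bigr do rewrite natz.
rewrite !natz; ring.
Qed.
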